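(* Let $F$ be a finite field of characteristic $3$. Let $k\ge 0$ be an integer, $m=3k+1$, and $t$ an integer with $t^3\equiv 1\pmod m$ and $\gcd(m,t-1)=1$. Let $G=T_{3m}=\langle x,y\mid x^m=y^3=1,\ y^{-1}xy=x^t\rangle$ (of order $3m$) and $FG$ its group algebra. Let $s\in FG$ be the sum of all elements of $G$ whose order is a power of $3$ (including the identity), and $\mathrm{Anh}(s)=\{\alpha\in FG\mid \alpha s=s\alpha=0\}$. Then $\dim_F J(FG)=\dim_F \mathrm{Anh}(s)=2$.
   Context: $J(FG)$ denotes the Jacobson radical of $FG$. *)

From HB Require Import structures.
From mathcomp Require Import all_boot all_order all_algebra all_fingroup all_solvable.
Set Implicit Arguments. Unset Strict Implicit. Unset Printing Implicit Defensive.
Import GRing.Theory.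
Local Open Scope ring_scope.

(* The group algebra F[gT] of a finite group gT over a field F, realised as
   the F-vector space of functions gT -> F (vectType over F), with the
   convolution product. *)
Definition galg (F : fieldType) (gT : finGroupType) := {ffun gT -> F^o}.

Definition gmul (F : fieldType) (gT : finGroupType) (a b : galg F gT) : galg F gT :=
  [ffun g : gT => \sum_(h : gT) a h * b ((h^-1 * g)%g)].

Definition gelt (F : fieldType) (gT : finGroupType) (g : gT) : galg F gT :=
  [ffun h : gT => if h == g then 1 else 0].

Definition left_ideal (F : fieldType) (gT : finGroupType) (I : {vspace galg F gT}) :=
  forall a b : galg F gT, b \in I -> gmul a b \in I.

Definition maximal_left_ideal (F : fieldType) (gT : finGroupType)
    (I : {vspace galg F gT}) :=
  [/\ left_ideal I, I != fullv &
      forall K : {vspace galg F gT}, left_ideal K -> (I <= K)%VS ->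
        K = I \/ K = fullv].

Definition in_jacobson (F : fieldType) (gT : finGroupType) (a : galg F gT) :=
  forall I : {vspace galg F gT}, maximal_left_ideal I -> a \in I.

(* Write N = <[x]>: it is normal, cyclic of order m = 1 (mod 3), no element
   outside N commutes with a nontrivial element of N (this is gcd(m, t - 1) = 1),
   and every element outside N has order 3.  Hence the sum e of the elements of N
   is a central idempotent of FG, the 3-elements are 1 and the elements outside N,
   and s = 1 + \hat G - e.  So s a = a s = 0 iff e a = a and a has augmentation 0;
   call this space J, spanned by e - e y and e - e y^2.
   Elements of J are e q (1 - y) with q commuting with 1 - y, and
   (1 - y)^3 = 1 - y^3 = 0 in characteristic 3; so J is a nil left ideal and lies
   in the radical, which we handle through left quasi-regularity.  Conversely, a
   radical element a has augmentation 0 and c = a - e a is radical with e c = 0.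
   Summing the N-conjugates of c g^-1 gives a radical element d supported on N
   with d(1) = c(g), because N acts regularly by conjugation on each coset outside
   N.  In the commutative algebra FN, d^q = d for q = |F|^phi(m), a power of 3,
   and a radical element with d^q = d vanishes.  Hence c = 0. *)

From HB Require Import structures.
From mathcomp Require Import all_boot all_order all_algebra all_fingroup all_solvable.
From mathcomp Require Import finfield.
From Stdlib Require Import Classical.
From mathcomp Require Import zify ring.
Set Implicit Arguments. Unset Strict Implicit. Unset Printing Implicit Defensive.
Import GRing.Theory.
Local Open Scope ring_scope.

Section GroupAlgebraRing.
Variables (F : fieldType) (gT : finGroupType).
Implicit Types (a b c : galg F gT) (g : gT).

Lemma gmulA : associative (@gmul F gT).
Proof.
move=> a b c; apply/esym/ffunP => g; rewrite !ffunE.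
under eq_bigr => k _ do rewrite ffunE big_distrl.
rewrite exchange_big; apply: eq_bigr => h _ /=.
rewrite ffunE big_distrr (reindex_inj (mulgI h)); apply: eq_bigr => l _ /=.
by rewrite mulKg invMg mulgA mulrA.
Qed.

Lemma gmulDl : left_distributive (@gmul F gT) +%R.
Proof.
move=> a b c; apply/ffunP => g; rewrite !ffunE -big_split.
by apply: eq_bigr => h _; rewrite ffunE mulrDl.
Qed.

Lemma gmulDr : right_distributive (@gmul F gT) +%R.
Proof.
move=> a b c; apply/ffunP => g; rewrite !ffunE -big_split.
by apply: eq_bigr => h _; rewrite ffunE mulrDr.
Qed.

Lemma gmulZl (k : F) a b : gmul (k *: a) b = k *: gmul a b.
Proof.
apply/ffunP => g; rewrite !ffunE [RHS]big_distrr.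
by apply: eq_bigr => h _ /=; rewrite ffunE mulrA.
Qed.

Lemma gmulZr (k : F) a b : gmul a (k *: b) = k *: gmul a b.
Proof.
apply/ffunP => g; rewrite !ffunE [RHS]big_distrr.
by apply: eq_bigr => h _ /=; rewrite ffunE mulrCA.
Qed.

Lemma gmul_geltl g a z : gmul (gelt F g) a z = a (g^-1 * z)%g.
Proof.
rewrite ffunE (bigD1 g) //= big1 ?addr0 => [|h /negPf nh]; rewrite ffunE ?eqxx ?mul1r //.
by rewrite nh mul0r.
Qed.

Lemma gmul_geltr g a z : gmul a (gelt F g) z = a (z * g^-1)%g.
Proof.
rewrite ffunE (bigD1 (z * g^-1)%g) //= big1 ?addr0 => [|h nh].
  by rewrite ffunE invMg invgK mulgKV eqxx mulr1.
rewrite ffunE; case: eqP => [hE|]; last by rewrite mulr0.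
by case/eqP: nh; rewrite -hE invMg invgK mulKVg.
Qed.

Lemma gmul1g : left_id (gelt F 1%g) (@gmul F gT).
Proof. by move=> a; apply/ffunP => z; rewrite gmul_geltl invg1 mul1g. Qed.

Lemma gmulg1 : right_id (gelt F 1%g) (@gmul F gT).
Proof. by move=> a; apply/ffunP => z; rewrite gmul_geltr invg1 mulg1. Qed.

Lemma gelt1_neq0 : gelt F (1%g : gT) != 0.
Proof. by apply/eqP => /ffunP /(_ 1%g); rewrite !ffunE eqxx; apply/eqP; exact: oner_neq0. Qed.

(* [{ffun gT -> F}] already carries the pointwise ring structure; the
   convolution ring lives on this alias, and elements must be cast to it. *)
Definition galg_ring := galg F gT.
HB.instance Definition _ := Vector.on galg_ring.
HB.instance Definition _ := GRing.Zmodule_isNzRing.Build galg_ring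
  gmulA gmul1g gmulg1 gmulDl gmulDr gelt1_neq0.
HB.instance Definition _ := GRing.Lmodule_isLalgebra.Build F galg_ring
  (fun k a b => esym (gmulZl k a b)).
HB.instance Definition _ := GRing.Lalgebra_isAlgebra.Build F galg_ring
  (fun k a b => esym (gmulZr k a b)).

End GroupAlgebraRing.

Section GroupAlgebra.
Variables (F : fieldType) (gT : finGroupType).
Local Notation R := (galg_ring F gT).
Local Notation "g %:FG" := (gelt F g : R) (at level 2, format "g %:FG").
Implicit Types (a b : R) (g h z : gT).

Lemma galgDE a b z : (a + b) z = a z + b z. Proof. by rewrite ffunE. Qed.
Lemma galgNE a z : (- a) z = - a z. Proof. by rewrite ffunE. Qed.
Lemma galgZE (k : F) a z : (k *: a) z = k * a z. Proof. by rewrite ffunE. Qed.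

Lemma galg_mulE a b z : (a * b) z = \sum_h a h * b (h^-1 * z)%g.
Proof. by rewrite ffunE. Qed.

Lemma gelt_mull g a z : (g%:FG * a) z = a (g^-1 * z)%g.
Proof. exact: gmul_geltl. Qed.

Lemma gelt_mulr g a z : (a * g%:FG) z = a (z * g^-1)%g.
Proof. exact: gmul_geltr. Qed.

Lemma geltM g h : g%:FG * h%:FG = (g * h)%g%:FG.
Proof.
apply/ffunP => z; rewrite gelt_mull !ffunE.
by rewrite -(inj_eq (mulgI g)) mulKVg.
Qed.

Lemma geltX g i : g%:FG ^+ i = (g ^+ i)%g%:FG.
Proof. by elim: i => [|i IH]; rewrite ?expr0 ?expg0 // exprS IH geltM expgS. Qed.

Lemma galg_expansion a : a = \sum_g a g *: g%:FG.
Proof.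
apply/ffunP => z; rewrite sum_ffunE (bigD1 z) //= big1 ?addr0 => [|h /negPf hz].
  by rewrite !ffunE eqxx [_ *: _]mulr1.
by rewrite !ffunE eq_sym hz [_ *: _]mulr0.
Qed.

Definition augment a : F := \sum_g a g.

Lemma augment_is_linear : linear_for *%R augment.
Proof.
move=> k a b; rewrite /augment big_distrr -big_split.
by apply: eq_bigr => g _; rewrite !ffunE.
Qed.
HB.instance Definition _ := GRing.isLinear.Build F R F *%R augment augment_is_linear.

Lemma augment_gelt g : augment g%:FG = 1.
Proof.
rewrite /augment (bigD1 g) //= big1 ?addr0 ?ffunE ?eqxx // => h /negPf hg.
by rewrite ffunE hg.
Qed.

Lemma augment_is_monoid_morphism : monoid_morphism augment.
Proof.
split=> [|a b]; first exact: augment_gelt.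
rewrite /augment big_distrl /=.
under eq_bigr => z _ do rewrite galg_mulE.
rewrite exchange_big; apply: eq_bigr => h _ /=.
rewrite -big_distrr /= (reindex_inj (mulgI h)) /=.
by under eq_bigr => z _ do rewrite mulKg.
Qed.
HB.instance Definition _ :=
  GRing.isMonoidMorphism.Build R F augment augment_is_monoid_morphism.

Definition gsum : R := [ffun => 1].

Lemma mulr_gsum a : a * gsum = augment a *: gsum.
Proof.
apply/ffunP => z; rewrite galg_mulE !ffunE [_ *: _]mulr1.
by apply: eq_bigr => h _; rewrite ffunE mulr1.
Qed.

Lemma mul_gsumr a : gsum * a = augment a *: gsum.
Proof.
apply/ffunP => z; rewrite galg_mulE !ffunE [_ *: _]mulr1.
rewrite (reindex_inj (inj_comp (mulgI z) (@invg_inj gT))) /=.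
by apply: eq_bigr => w _; rewrite ffunE mul1r invMg invgK mulgKV.
Qed.

End GroupAlgebra.

Arguments augment {F gT}.
Arguments gsum {F gT}.

Section JacobsonRadical.
Variables (F : fieldType) (gT : finGroupType).
Local Notation R := (galg_ring F gT).
Implicit Types (a b c d u : R).

Definition quasi_regular a := forall r, exists s, s * (1 - r * a) = 1.

Definition principal_lideal u : {vspace R} := limg (linfun (u \o* idfun)).

Lemma principal_lidealP u b : reflect (exists c, b = c * u) (b \in principal_lideal u).
Proof.
apply: (iffP memv_imgP) => [[c _ ->]|[c ->]]; first by exists c; rewrite lfunE.
by exists c; rewrite ?memvf ?lfunE.
Qed.

Lemma left_ideal_principal u : left_ideal (principal_lideal u).
Proof.
move=> a b /principal_lidealP[c ->]; apply/principal_lidealP.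
by exists ((a : R) * c); exact: mulrA.
Qed.

Lemma principal_lideal_id u : u \in principal_lideal u.
Proof. by apply/principal_lidealP; exists 1; rewrite mul1r. Qed.

Lemma left_ideal_one (I : {vspace R}) : left_ideal I -> (1 : R) \in I -> I = fullv.
Proof.
move=> hI oI; apply/eqP; rewrite eqEsubv subvf; apply/subvP => b _.
by rewrite -[b]mulr1; apply: hI.
Qed.

Lemma maximal_left_ideal_exists (L : {vspace R}) : left_ideal L -> L != fullv ->
  exists2 I, maximal_left_ideal I & (L <= I)%VS.
Proof.
have [n] := ubnP (\dim (fullv : {vspace R}) - \dim L)%N.
elim: n L => // n IH L codimL hL Lfull.
have [[K [hK LK KL Kfull]]|noK] :=
  classic (exists K : {vspace R}, [/\ left_ideal K, (L <= K)%VS, K != L & K != fullv]).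
  have ltLK : (\dim L < \dim K)%N.
    by rewrite ltn_neqAle (dimv_leqif_eq LK) eq_sym KL dimvS.
  have leK : (\dim K <= \dim (fullv : {vspace R}))%N by rewrite dimvS ?subvf.
  have [I maxI KI] := IH K ltac:(lia) hK Kfull.
  by exists I; last exact: subv_trans KI.
exists L => //; split=> // K hK LK.
have [->|KL] := eqVneq K L; first by left.
have [->|Kfull] := eqVneq K fullv; first by right.
by case: noK; exists K; exact: And4 hK LK KL Kfull.
Qed.

Lemma in_jacobsonP a : in_jacobson a <-> quasi_regular a.
Proof.
split=> [ja r | qa I maxI].
  set u := 1 - r * a.
  have [/principal_lidealP[s ->]|uL] := boolP ((1 : R) \in principal_lideal u).
    by exists s.
  have uLfull : principal_lideal u != fullv.
    by apply: contra uL => /eqP ->; rewrite memvf.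
  have [I maxI LI] := maximal_left_ideal_exists (@left_ideal_principal u) uLfull.
  have [hI Ifull _] := maxI.
  have raI : r * a \in I := hI r a (ja I maxI).
  have uI : u \in I := subvP LI _ (principal_lideal_id u).
  have oneI : (1 : R) \in I by rewrite -(subrK (r * a) 1) memvD.
  by move: Ifull; rewrite (left_ideal_one hI oneI) eqxx.
have [hI Ifull maxLI] := maxI; apply/negPn/negP => aI.
have hK : left_ideal (I + principal_lideal a)%VS.
  move=> c b /memv_addP[i iI [w wL ->]]; rewrite gmulDr memv_add //; first exact: hI.
  exact: left_ideal_principal.
have [KI|Kfull] := maxLI _ hK (addvSl I _).
  by case/negP: aI; rewrite -KI (subvP (addvSr _ _)) // principal_lideal_id.
have /memv_addP[i iI [w /principal_lidealP[r ->] ira]] : (1 : R) \in (I + principal_lideal a)%VS.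
  by rewrite Kfull memvf.
have [s sra] := qa r.
have oneI : (1 : R) \in I by rewrite -sra (_ : 1 - r * a = i) ?(hI s) // ira addrK.
by move: Ifull; rewrite (left_ideal_one hI oneI) eqxx.
Qed.

Lemma quasi_regularMr a c : quasi_regular a -> quasi_regular (a * c).
Proof.
(* A left inverse s of 1 - c r a yields the left inverse 1 + r a s c of 1 - r a c. *)
move=> qa r; have [s sa] := qa (c * r); exists (1 + r * a * s * c).
have sc : s * c - s * (c * r * a) * c = c.
  by rewrite -mulrBl -{1}[s]mulr1 -mulrBr sa mul1r.
have rasc : r * a * s * c - r * a * s * c * (r * (a * c)) = r * (a * c).
  by rewrite -{4}sc !mulrBr !mulrA.
by rewrite mulrDl mul1r mulrBr mulr1 rasc subrK.
Qed.

Lemma in_jacobson0 : in_jacobson (0 : R).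
Proof. by move=> I _; rewrite mem0v. Qed.

Lemma in_jacobsonB a b : in_jacobson a -> in_jacobson b -> in_jacobson (a - b).
Proof. by move=> ja jb I maxI; rewrite memvB ?ja ?jb. Qed.

Lemma in_jacobsonD a b : in_jacobson a -> in_jacobson b -> in_jacobson (a + b).
Proof. by move=> ja jb I maxI; rewrite memvD ?ja ?jb. Qed.

Lemma in_jacobson_sum (I : Type) (r : seq I) (P : pred I) (f : I -> R) :
  (forall i, P i -> in_jacobson (f i)) -> in_jacobson (\sum_(i <- r | P i) f i).
Proof. by move=> jf; apply: big_ind => //; [exact: in_jacobson0 | exact: in_jacobsonD]. Qed.

Lemma in_jacobsonMl c a : in_jacobson a -> in_jacobson (c * a).
Proof. by move=> ja I maxI; have [hI _ _] := maxI; exact: hI (ja I maxI). Qed.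

Lemma in_jacobsonMr a c : in_jacobson a -> in_jacobson (a * c).
Proof. by move=> /in_jacobsonP qa; apply/in_jacobsonP; exact: quasi_regularMr. Qed.

Lemma quasi_regular_nil a n : (forall r, (r * a) ^+ n = 0) -> quasi_regular a.
Proof.
move=> nil r; set u := r * a; exists (\sum_(i < n) u ^+ i).
have cu : GRing.comm (u - 1) (\sum_(i < n) u ^+ i).
  by apply: commr_sum => i _; apply/commrX/commr_sym/commrB; [exact: commr_refl | exact: commr1].
by rewrite -opprB mulrN -cu -subrX1 nil sub0r opprK.
Qed.

Lemma quasi_regular_periodic_eq0 d n : quasi_regular d -> (1 < n)%N -> d ^+ n = d -> d = 0.
Proof.
move=> qd n_gt1 dn; have [s sd] := qd (d ^+ n.-2).
have n2 : n.-2.+2 = n by lia.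
by rewrite -[d]mul1r -sd -mulrA mulrBl mul1r -!exprSr n2 dn subrr mulr0.
Qed.

Lemma quasi_regular_augment a : quasi_regular a -> augment a = 0.
Proof.
move=> qa; apply: contraTeq isT => a_neq0.
have [s sa] := qa ((augment a)^-1 *: 1).
have := congr1 augment sa.
rewrite -scalerAl mul1r rmorphM rmorphB /= linearZ /= rmorph1 mulVf // subrr mulr0.
by move/eqP; rewrite eq_sym oner_eq0.
Qed.

End JacobsonRadical.

Section CharPowerSums.
Variables (R : nzRingType) (p : nat).
Hypothesis pcharRp : p \in [pchar R].
Variables (I : Type) (r : seq I) (P : pred I) (f : I -> R).
Hypothesis f_comm : forall i j, P i -> P j -> GRing.comm (f i) (f j).

Lemma exprp_sum_comm : (\sum_(i <- r | P i) f i) ^+ p = \sum_(i <- r | P i) f i ^+ p.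
Proof.
elim: r => [|i s IH]; first by rewrite !big_nil -(pFrobenius_autE pcharRp) pFrobenius_aut0.
rewrite !big_cons; case: ifP => // Pi.
have fi_comm : GRing.comm (f i) (\sum_(j <- s | P j) f j).
  by apply: commr_sum => j Pj; apply: f_comm.
by rewrite -!(pFrobenius_autE pcharRp) pFrobenius_autD_comm // !pFrobenius_autE IH.
Qed.

End CharPowerSums.

Lemma exprpn_sum_comm (R : nzRingType) (p : nat) (I : Type) (r : seq I) (P : pred I)
    (f : I -> R) n :
  p \in [pchar R] -> (forall i j, P i -> P j -> GRing.comm (f i) (f j)) ->
  (\sum_(i <- r | P i) f i) ^+ (p ^ n) = \sum_(i <- r | P i) f i ^+ (p ^ n).
Proof.
move=> pcharRp f_comm; elim: n => [|n IH].
  by rewrite expn0 expr1; apply: eq_bigr => i _; rewrite expr1.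
rewrite expnSr exprM IH exprp_sum_comm //; first by apply: eq_bigr => i _; rewrite -exprM.
by move=> i j Pi Pj; apply/commrX/commr_sym/commrX/commr_sym/f_comm.
Qed.

Section T3m.
Variables (gT : finGroupType) (k : nat) (t : int) (x y : gT).
Let m := (3 * k + 1)%N.
Hypothesis tgcd : gcdz m%:Z (t - 1) = 1%N.
Hypothesis gen : <<[set x; y]>>%g = [set: gT].
Hypotheses (xm : (x ^+ m)%g = 1%g) (y3 : (y ^+ 3)%g = 1%g).
Hypothesis xy : (x ^ y)%g = (x ^+ `|(t %% m%:Z)%Z|%N)%g.
Hypothesis cardG : #|gT| = (3 * m)%N.

Let m_mod3 : m = 1 %[mod 3]. Proof. by rewrite /m mulnC modnMDl. Qed.
Let m_gt0 : (0 < m)%N. Proof. by rewrite /m addn1. Qed.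

Section Group.
Local Open Scope group_scope.
Local Notation N := <[x]>.

Lemma norm_cycle_x g : g \in 'N(N).
Proof.
have yN : y \in 'N(N).
  apply/normP/eqP; rewrite eqEcard cardJg leqnn andbT -cycleJ xy.
  by rewrite cycle_subG groupX // cycle_id.
have : [set: gT] \subset 'N(N).
  rewrite -gen gen_subG; apply/subsetP => z; rewrite in_set2 => /orP[]/eqP-> //.
  exact: subsetP (normG _) _ (cycle_id x).
by move/subsetP; apply; rewrite inE.
Qed.

Lemma mul_cycle_xy : N * <[y]> = [set: gT].
Proof.
rewrite -norm_joinEr; last by apply/subsetP => z _; apply: norm_cycle_x.
apply/eqP; rewrite eqEsubset subsetT /= -gen gen_subG.
apply/subsetP => z; rewrite in_set2 => /orP[]/eqP->.
  exact: subsetP (joing_subl _ _) _ (cycle_id x).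
exact: subsetP (joing_subr _ _) _ (cycle_id y).
Qed.

Lemma card_cycle_xy : [/\ #|N| = m, #[y] = 3%N & N :&: <[y]> = 1].
Proof.
have leN : (#|N| <= m)%N by apply: dvdn_leq => //; rewrite order_dvdn xm.
have leY : (#[y] <= 3)%N by apply: dvdn_leq => //; rewrite order_dvdn y3.
have geI : (0 < #|N :&: <[y]>|)%N by rewrite cardG_gt0.
have cardNY : (#|N| * #[y] = 3 * m * #|N :&: <[y]>|)%N.
  by have := mul_cardG N <[y]>; rewrite mul_cycle_xy cardsT cardG.
have cardN : #|N| = m by nia.
have ordy : #[y] = 3%N by nia.
have cardI : #|N :&: <[y]>| = 1%N by nia.
by split=> //; apply: card1_trivg.
Qed.

Lemma card_cycle_x : #|N| = m. Proof. by case: card_cycle_xy. Qed.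

Lemma order_x : #[x] = m. Proof. exact: card_cycle_x. Qed.

Lemma cycle_x_decomp z : exists2 n, n \in N & exists2 j, (j < 3)%N & z = n * y ^+ j.
Proof.
have : z \in N * <[y]> by rewrite mul_cycle_xy inE.
case/mulsgP => n _ nN /cycleP[i ->] ->.
by exists n => //; exists (i %% 3)%N; rewrite ?ltn_mod ?expg_mod.
Qed.

Lemma expy_in_cycle_x i : (i < 3)%N -> (y ^+ i \in N) = (i == 0%N).
Proof.
move=> lti; apply/idP/eqP => [yiN|->]; last exact: group1.
have : y ^+ i \in N :&: <[y]> by rewrite inE yiN mem_cycle.
case: card_cycle_xy => _ ordy ->; rewrite inE -(expg0 y) eq_expg_mod_order ordy.
by rewrite !modn_small // => /eqP.
Qed.

Lemma cycle_x_expy_coset n i j : n \in N -> (i < 3)%N -> (j < 3)%N ->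
  (n * y ^+ j * (y ^+ i)^-1 \in N) = (i == j).
Proof.
move=> nN lti ltj; rewrite -mulgA groupMl //.
have -> : (y ^+ i)^-1 = y ^+ (3 - i).
  by apply/eqP; rewrite eq_invg_mul -expgD subnKC ?y3 // ltnW.
rewrite -expgD -(expg_mod _ y3) expy_in_cycle_x ?ltn_mod //.
by case: i lti => [|[|[|]]] //; case: j ltj => [|[|[|]]].
Qed.

Lemma cent_cycle_x_y w : w \in N -> commute y w -> w = 1.
Proof.
case/cycleP=> i -> cyw; set t' := `|(t %% m%:Z)%Z|%N.
have /eqP : x ^+ (t' * i) = x ^+ i by rewrite expgM -xy -conjXg conjgE -cyw mulKg.
rewrite eq_expg_mod_order order_x => /eqP t'i.
have et : t'%:Z = (t %% m%:Z)%Z by rewrite gez0_abs // modz_ge0 // -lt0n.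
have : (m%:Z %| ((t - 1) * i%:Z)%R)%Z.
  have -> : ((t - 1) * i%:Z = ((t' * i)%N%:Z - i%:Z) + (t %/ m%:Z)%Z * i%:Z * m%:Z)%R.
    by rewrite PoszM et {1}(divz_eq t m%:Z); ring.
  by rewrite rpredD ?dvdz_mull // -eqz_mod_dvd !modz_nat t'i.
rewrite Gauss_dvdzr; last by rewrite /coprimez tgcd.
by rewrite dvdzE !absz_nat -order_x order_dvdn => /eqP.
Qed.

Lemma cent_cycle_x_out z w : z \notin N -> w \in N -> commute z w -> w = 1.
Proof.
have [n nN [j ltj ->]] := cycle_x_decomp z => zN wN czw.
have cyjw : commute (y ^+ j) w.
  apply: (mulgI n).
  by rewrite mulgA czw mulgA (centsP (cycle_abelian x) _ wN _ nN) -mulgA.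
apply: cent_cycle_x_y => //.
case: j ltj cyjw zN {czw} => [|[|[|]]] // _ cy2w zN.
  by rewrite expg0 mulg1 nN in zN.
have := commute_sym (commuteX 2 (commute_sym cy2w)).
by rewrite -expgM (_ : 2 * 2 = 3 + 1)%N // expgD y3 mul1g expg1.
Qed.

Lemma expg_mul_cycle_x n q i : n \in N -> exists2 n', n' \in N & (n * q) ^+ i = n' * q ^+ i.
Proof.
move=> nN; elim: i => [|i [n' n'N IH]]; first by exists 1; rewrite ?group1 // !expg0 mulg1.
exists (n' * n ^ (q ^+ i)^-1); first by rewrite groupM // memJ_norm // norm_cycle_x.
by rewrite expgSr IH !conjgE invgK expgSr !mulgA mulgKV.
Qed.

Lemma expg3_out_cycle_x z : z \notin N -> z ^+ 3 = 1.
Proof.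
move=> zN; apply: (cent_cycle_x_out zN); last exact: commuteX.
have [n nN [j ltj ->]] := cycle_x_decomp z.
have [n' n'N ->] := expg_mul_cycle_x (y ^+ j) 3 nN.
by rewrite -expgM mulnC expgM y3 expg1n mulg1.
Qed.

Lemma p_elt3_T3m z : 3.-elt z = (z == 1) || (z \notin N).
Proof.
have [zN|zN] /= := boolP (z \in N); last first.
  by rewrite orbT; apply: (@pnat_dvd _ 3); rewrite ?pnat_id // order_dvdn expg3_out_cycle_x.
rewrite orbF; apply/idP/eqP => [pz|->]; last exact: p_elt1.
have : (3%N)^'.-nat #[z].
  apply: (@pnat_dvd _ m); first by rewrite -order_x; exact: order_dvdG.
  by rewrite p'natE // /dvdn m_mod3.
by move/(pnat_1 pz)/eqP; rewrite order_eq1 => /eqP.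
Qed.

Lemma sum_conj_out_cycle_x (V : nmodType) (f : gT -> V) z : z \notin N ->
  \sum_(n in N) f (z ^ n)%g = \sum_(n in N) f (n * z)%g.
Proof.
(* n |-> z^n z^-1 permutes N, as no nontrivial element of N commutes with z. *)
move=> zN; pose psi n := z ^ n * z^-1.
have psiN n : n \in N -> psi n \in N.
  move=> nN; have -> : psi n = n^-1 * n ^ z^-1 by rewrite /psi !conjgE invgK !mulgA.
  by rewrite groupM ?groupV // memJ_norm ?norm_cycle_x.
have psi_inj : {in N &, injective psi}.
  move=> a b aN bN /mulIg zab.
  have : commute z (a * b^-1).
    by apply/commgP/conjg_fixP; rewrite conjgM zab -conjgM mulgV conjg1.
  by move/(cent_cycle_x_out zN (groupM aN (groupVr bN)))/eqP; rewrite -eq_mulgV1 => /eqP.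
have psiNN : psi @: N = N.
  apply/eqP; rewrite eqEcard card_in_imset // leqnn andbT.
  by apply/subsetP => _ /imsetP[n nN ->]; apply: psiN.
by rewrite -{2}psiNN big_imset //; apply: eq_bigr => n _; rewrite mulgKV.
Qed.

End Group.

Section Algebra.
Variable F : finFieldType.
Hypothesis pF : 3%N \in [pchar F].
Local Notation R := (galg_ring F gT).
Local Notation "g %:FG" := (gelt F g : R) (at level 2, format "g %:FG").
Local Notation N := <[x]>%g.
Local Notation Y := y%:FG.
Implicit Types (a b c d : R) (g z : gT).

Lemma natr_m : (m%:R : F) = 1.
Proof. by rewrite /m natrD natrM (pcharf0 pF) mul0r add0r. Qed.

Lemma pchar_galg : 3%N \in [pchar R].
Proof. by rewrite pchar_lalg. Qed.

Definition idemN : R := [ffun z => (z \in N)%:R].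

Lemma idemN_mull a z : (idemN * a) z = \sum_(n in N) a (n * z)%g.
Proof.
rewrite galg_mulE [LHS](reindex_inj invg_inj) [RHS]big_mkcond /=.
by apply: eq_bigr => n _; rewrite ffunE groupV invgK; case: (n \in N); rewrite ?mul1r ?mul0r.
Qed.

Lemma idemN_central a : idemN * a = a * idemN.
Proof.
rewrite [a]galg_expansion mulr_sumr mulr_suml; apply: eq_bigr => g _.
rewrite -scalerAr -scalerAl; congr (_ *: _); apply/ffunP => z.
rewrite gelt_mull gelt_mulr !ffunE -(memJ_norm _ (norm_cycle_x g)).
by rewrite conjgE !mulgA mulgKV.
Qed.

Lemma idemN_idem : idemN * idemN = idemN.
Proof.
apply/ffunP => z; rewrite idemN_mull [idemN z]ffunE.
have [zN|zN] := boolP (z \in N).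
  under eq_bigr => n nN do rewrite ffunE groupMl // zN.
  by rewrite sumr_const card_cycle_x natr_m.
by rewrite big1 // => n nN; rewrite ffunE groupMl // (negPf zN).
Qed.

Lemma augment_idemN : augment idemN = 1.
Proof.
rewrite /augment (bigID (mem N)) /= [X in _ + X]big1 ?addr0 => [|z /negPf zN]; last first.
  by rewrite ffunE zN.
under eq_bigr => z zN do rewrite ffunE zN.
by rewrite sumr_const card_cycle_x natr_m.
Qed.

Lemma idemN_fixed_invariant a n z : idemN * a = a -> n \in N -> a (n * z)%g = a z.
Proof.
move=> ea nN; rewrite -ea !idemN_mull [LHS](reindex_inj (mulIg n^-1%g)) /=.
by apply: eq_big => [h|h _]; rewrite ?groupMr ?groupV // mulgA mulgKV.
Qed.

Definition radJ_gen i : R := idemN - idemN * Y ^+ i.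
Definition radJ : {vspace galg F gT} := <<[:: radJ_gen 1; radJ_gen 2]>>%VS.

Lemma idemN_expyE i z : (idemN * Y ^+ i) z = ((z * (y ^+ i)^-1)%g \in N)%:R.
Proof. by rewrite geltX gelt_mulr ffunE. Qed.

Lemma idemN_decomp a : idemN * a = a ->
  a = a 1%g *: idemN + a y *: (idemN * Y) + a (y ^+ 2)%g *: (idemN * Y ^+ 2).
Proof.
move=> ea; apply/ffunP => z; have [n nN [j ltj ->]] := cycle_x_decomp z.
have cE i : (i < 3)%N -> (idemN * Y ^+ i) (n * y ^+ j)%g = (i == j)%:R.
  by move=> lti; rewrite idemN_expyE cycle_x_expy_coset.
have := cE 0%N isT; have := cE 1%N isT; have := cE 2%N isT.
rewrite expr0 mulr1 expr1 => c2 c1 c0.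
rewrite !galgDE !galgZE c0 c1 c2 idemN_fixed_invariant //.
case: j ltj {c0 c1 c2 cE} => [|[|[|]]] //= _;
  by rewrite ?expg0 ?expg1 !(mulr0, mulr1, addr0, add0r).
Qed.

Lemma augment_idemN_expy i : augment (idemN * Y ^+ i) = 1.
Proof. by rewrite rmorphM /= augment_idemN geltX augment_gelt mulr1. Qed.

Lemma idemN_radJ_gen i : idemN * radJ_gen i = radJ_gen i.
Proof. by rewrite mulrBr mulrA idemN_idem. Qed.

Lemma augment_radJ_gen i : augment (radJ_gen i) = 0.
Proof. by rewrite raddfB /= augment_idemN_expy augment_idemN subrr. Qed.

Lemma mem_radJ a : a \in radJ <-> idemN * a = a /\ augment a = 0.
Proof.
rewrite /radJ span_cons span_seq1; split.
  case/memv_addP => _ /vlineP[c1 ->] [_ /vlineP[c2 ->] ->].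
  split; first by rewrite mulrDr -!scalerAr !idemN_radJ_gen.
  by rewrite [augment _]raddfD /= !linearZ /= !augment_radJ_gen !mulr0 addr0.
case=> ea aug0; have aE := idemN_decomp ea.
have a1 : a 1%g = - a y - a (y ^+ 2)%g.
  move: aug0; rewrite {1}aE [augment _]raddfD /= [augment _]raddfD /= !linearZ /=.
  rewrite augment_idemN (augment_idemN_expy 1) augment_idemN_expy !mulr1 -addrA => /eqP.
  by rewrite addr_eq0 opprD => /eqP.
apply/memv_addP; exists (- a y *: radJ_gen 1); first exact/vlineP/ex_intro.
exists (- a (y ^+ 2)%g *: radJ_gen 2); first exact/vlineP/ex_intro.
rewrite {1}aE a1 /radJ_gen expr1 scalerBl !scalerBr !scaleNr !opprK !addrA.
by rewrite [_ - a (y ^+ 2)%g *: idemN + _]addrAC.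
Qed.

Lemma radJ_gen_expy i j : (i < 3)%N -> (j < 3)%N ->
  radJ_gen i (y ^+ j)%g = (0 == j)%:R - (i == j)%:R.
Proof.
move=> lti ltj; rewrite galgDE galgNE idemN_expyE ffunE eq_sym -expy_in_cycle_x //.
by rewrite -[(y ^+ j)%g]mul1g cycle_x_expy_coset.
Qed.

Lemma dim_radJ : \dim radJ = 2%N.
Proof.
have free_gen : free [:: radJ_gen 1; radJ_gen 2].
  rewrite free_cons seq1_free span_seq1; apply/andP; split.
    apply/vlineP => -[c /(congr1 (fun b : R => b (y ^+ 1)%g))].
    by rewrite galgZE !radJ_gen_expy //= subrr mulr0 sub0r => /eqP; rewrite oppr_eq0 oner_eq0.
  apply/eqP => /(congr1 (fun b : R => b (y ^+ 0)%g)).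
  by rewrite radJ_gen_expy //= ffunE subr0 => /eqP; rewrite oner_eq0.
by have /eqP := free_gen.
Qed.

Lemma radJ_cube a : a \in radJ -> a ^+ 3 = 0.
Proof.
rewrite /radJ span_cons span_seq1 => /memv_addP[_ /vlineP[c1 ->] [_ /vlineP[c2 ->] ->]].
set u := 1 - Y; set q := c1%:A + c2%:A * (1 + Y).
have uY : GRing.comm u Y by apply/commr_sym/commrB; [exact: commr1 | exact: commr_refl].
have uq : GRing.comm u q.
  apply: commrD; first exact/commr_sym/comm_alg.
  by apply: commrM; [exact/commr_sym/comm_alg | exact: commrD (commr1 u) uY].
have v1E : radJ_gen 1 = idemN * u by rewrite /radJ_gen /u mulrBr mulr1 expr1.
have v2E : radJ_gen 2 = idemN * (1 + Y) * u.
  by rewrite /radJ_gen /u -mulrA mulrDl mul1r mulrBr mulr1 -expr2 addrA subrK mulrBr mulr1.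
have -> : c1 *: radJ_gen 1 + c2 *: radJ_gen 2 = idemN * q * u.
  by rewrite v1E v2E [idemN * q]mulrDr [idemN * (_ * _)]mulrA !mulr_algr mulrDl -!scalerAl.
have u3 : u ^+ 3 = 0.
  rewrite /u -(pFrobenius_autE pchar_galg) pFrobenius_autB_comm; last exact/commr_sym/commr1.
  by rewrite !pFrobenius_autE expr1n geltX y3 subrr.
rewrite exprMn_comm ?u3 ?mulr0 //.
by rewrite /GRing.comm -mulrA -uq !mulrA idemN_central.
Qed.

Lemma radJ_in_jacobson a : a \in radJ -> in_jacobson a.
Proof.
move=> /mem_radJ[ea aug0]; apply/in_jacobsonP/(@quasi_regular_nil _ _ _ 3) => r.
apply/radJ_cube/mem_radJ; split; first by rewrite mulrA idemN_central -mulrA ea.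
by rewrite rmorphM /= aug0 mulr0.
Qed.

Definition conjN_sum a : R := \sum_(n in N) n%:FG * a * (n^-1)%g%:FG.

Lemma conjN_sumE a z : conjN_sum a z = \sum_(n in N) a (z ^ n)%g.
Proof.
by rewrite sum_ffunE; apply: eq_bigr => n _; rewrite gelt_mulr gelt_mull invgK conjgE.
Qed.

Lemma conjN_sum_out a z : z \notin N -> conjN_sum a z = (idemN * a) z.
Proof. by move=> zN; rewrite conjN_sumE sum_conj_out_cycle_x // idemN_mull. Qed.

Lemma conjN_sum1 a : conjN_sum a 1%g = a 1%g.
Proof.
rewrite conjN_sumE (eq_bigr (fun _ => a 1%g)) => [|n _]; last by rewrite conj1g.
by rewrite sumr_const card_cycle_x -mulr_natl natr_m mul1r.
Qed.

Lemma in_jacobson_conjN_sum a : in_jacobson a -> in_jacobson (conjN_sum a).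
Proof.
by move=> ja; apply: in_jacobson_sum => n _; apply/in_jacobsonMr/in_jacobsonMl.
Qed.

Let q := (3 ^ (logn 3 #|F| * totient m))%N.

Lemma card_F : #|F| = (3 ^ logn 3 #|F|)%N.
Proof. exact: card_pprimeChar pF. Qed.

Lemma q_gt1 : (1 < q)%N.
Proof.
rewrite -[X in (X < _)%N](expn0 3) ltn_exp2l // muln_gt0 totient_gt0 m_gt0 andbT.
by rewrite lt0n; apply: contraTneq (finNzRing_gt1 F) => log0; rewrite card_F log0.
Qed.

Lemma expr_q (c : F) : c ^+ q = c.
Proof.
rewrite /q expnM -card_F.
by elim: (totient m) => [|i IH]; rewrite ?expn0 ?expr1 // expnS exprM expf_card IH.
Qed.

Lemma expg_q n : n \in N -> (n ^+ q)%g = n.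
Proof.
move=> nN; have ord_n : (#[n]%g %| m)%N by rewrite -card_cycle_x order_dvdG.
have coprimeFm : coprime #|F| m.
  by rewrite card_F coprimeXl // prime_coprime // /dvdn m_mod3.
rewrite -{2}(expg1 n); apply/eqP; rewrite eq_expg_mod_order.
by rewrite -(modn_dvdm q ord_n) /q expnM -card_F Euler_exp_totient // modn_dvdm.
Qed.

Lemma supported_cycle_x_expr_q b : (forall z, z \notin N -> b z = 0) -> b ^+ q = b.
Proof.
move=> bN; have bE : b = \sum_(n in N) b n *: n%:FG.
  rewrite {1}[b]galg_expansion (bigID (mem N)) /= [X in _ + X]big1 ?addr0 // => z zN.
  by rewrite bN // scale0r.
have bN_comm i j : i \in N -> j \in N -> GRing.comm (b i *: i%:FG) (b j *: j%:FG).
  move=> iN jN; rewrite /GRing.comm -!scalerAl -!scalerAr !scalerA mulrC !geltM.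
  by rewrite (centsP (cycle_abelian x) _ iN _ jN).
rewrite [in LHS]bE /q (exprpn_sum_comm _ _ pchar_galg bN_comm) {2}bE.
by apply: eq_bigr => n nN; rewrite exprZn geltX expr_q expg_q.
Qed.

Lemma in_jacobson_supported_cycle_x_eq0 b :
  in_jacobson b -> (forall z, z \notin N -> b z = 0) -> b = 0.
Proof.
move=> /in_jacobsonP qb bN; apply: quasi_regular_periodic_eq0 qb q_gt1 _.
exact: supported_cycle_x_expr_q.
Qed.

Lemma in_jacobson_radJ a : in_jacobson a -> a \in radJ.
Proof.
move=> ja; apply/mem_radJ; split; last exact/quasi_regular_augment/in_jacobsonP.
pose c := a - idemN * a.
suff c0 : c = 0 by move/eqP: c0; rewrite subr_eq0 => /eqP <-.
have jc : in_jacobson c := in_jacobsonB ja (in_jacobsonMl _ ja).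
have ec : idemN * c = 0 by rewrite mulrBr mulrA idemN_idem subrr.
apply/ffunP => g; pose cg := c * (g^-1)%g%:FG.
have cg0 : conjN_sum cg = 0.
  apply: in_jacobson_supported_cycle_x_eq0; first exact/in_jacobson_conjN_sum/in_jacobsonMr.
  by move=> z zN; rewrite conjN_sum_out // mulrA ec mul0r ffunE.
by have := conjN_sum1 cg; rewrite cg0 gelt_mulr invgK mul1g !ffunE => <-.
Qed.

Lemma mem_radJ_jacobson a : a \in radJ <-> in_jacobson a.
Proof. by split; [exact: radJ_in_jacobson | exact: in_jacobson_radJ]. Qed.

Lemma sum_p_elt3 : \sum_(g | (3.-elt g)%g) g%:FG = 1 + gsum - idemN.
Proof.
apply/ffunP => z; rewrite sum_ffunE !galgDE galgNE !ffunE.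
have [pz|npz] := boolP (3.-elt z)%g.
  rewrite (bigD1 z) //= big1 => [|g /andP[_ /negPf gz]]; last by rewrite ffunE eq_sym gz.
  move: pz; rewrite ffunE eqxx addr0 p_elt3_T3m.
  by have [->|_] /= := eqVneq z 1%g; [rewrite group1 addrK | move/negPf->; rewrite subr0 add0r].
rewrite big1 => [|g pg]; last by rewrite ffunE; case: eqP => // zg; move: npz; rewrite zg pg.
move: npz; rewrite p_elt3_T3m negb_or negbK => /andP[/negPf-> ->].
by rewrite add0r subrr.
Qed.

Lemma annihilator_radJ a :
  a \in radJ <-> a * (1 + gsum - idemN) = 0 /\ (1 + gsum - idemN) * a = 0.
Proof.
have s_a : (1 + gsum - idemN) * a = a + augment a *: gsum - idemN * a.
  by rewrite mulrBl mulrDl mul1r mul_gsumr.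
have a_s : a * (1 + gsum - idemN) = a + augment a *: gsum - idemN * a.
  by rewrite mulrBr mulrDr mulr1 mulr_gsum idemN_central.
rewrite mem_radJ a_s s_a; split=> [[ea aug0]|[_ sa0]].
  by rewrite ea aug0 scale0r addr0 subrr.
have aug0 : augment a = 0.
  have := congr1 (fun b => (idemN * b) 1%g) sa0.
  rewrite /= mulrBr mulrDr -scalerAr mulr_gsum augment_idemN scale1r mulrA idemN_idem.
  by rewrite addrAC subrr add0r mulr0 galgZE !ffunE mulr1.
by move: sa0; rewrite aug0 scale0r addr0 => /eqP; rewrite subr_eq0 => /eqP <-.
Qed.

End Algebra.

End T3m.

Theorem proposition3p6
  (F : finFieldType) (gT : finGroupType) (k : nat) (t : int) (x y : gT) :
  3%N \in [pchar F] ->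
  let m := (3 * k + 1)%N in
  (t ^+ 3 = 1 %[mod m%:Z])%Z ->
  gcdz m%:Z (t - 1) = 1%N ->
  (* gT is the group T_{3m} = < x, y | x^m = y^3 = 1, y^-1 x y = x^t > *)
  <<[set x; y]>>%g = [set: gT] ->
  (x ^+ m)%g = 1%g -> (y ^+ 3)%g = 1%g ->
  (x ^ y)%g = (x ^+ `|(t %% m%:Z)%Z|%N)%g ->
  #|gT| = (3 * m)%N ->
  let s : galg F gT := \sum_(g : gT | (3.-elt g)%g) gelt F g in
  (exists J : {vspace galg F gT},
      (forall a, a \in J <-> in_jacobson a) /\ \dim J = 2%N) /\
  (exists A : {vspace galg F gT},
      (forall a, a \in A <-> gmul a s = 0 /\ gmul s a = 0) /\ \dim A = 2%N).
Proof.
move=> pF m _ tgcd gen xm y3 xy cardG s.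
have dimJ := dim_radJ tgcd gen xm y3 xy cardG F.
have sE : s = 1 + gsum - idemN x F := sum_p_elt3 tgcd gen xm y3 xy cardG F.
split; exists (radJ x y F); split=> // a.
  exact: (mem_radJ_jacobson tgcd gen xm y3 xy cardG pF).
by rewrite sE; exact: (annihilator_radJ tgcd gen xm y3 xy cardG pF).
Qed.
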